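(* Let $S$ be a poset and let $S\otimes_i G_i$ and $S\otimes_i H_i$ be terminating ordered joins in the same shape $S$. If $G_i\simeq_1 H_i$ for every $i\in S$, then $S\otimes_i G_i\simeq_1 S\otimes_i H_i$.
   Context: All games are impartial combinatorial games under normal play; a game is determined by its set of options, and $G \to G'$ means $G'$ is an option of $G$. A game is terminating if it admits no infinite sequence of moves. $\mathbf{0}$ denotes the game with no options. The Grundy number of a terminating game $G$ is the ordinal $\Gamma_0(G)=\operatorname{mex}\{\Gamma_0(G') : G\to G'\}$, where $\operatorname{mex}\Lambda$ is the least ordinal not in the set of ordinals $\Lambda$. The Grundy set of a terminating game $G$ is $\Gamma_1(G)=\{\Gamma_0(G') : G\to G'\}$. Games $G,H$ are $1$-equivalent, $G\simeq_1 H$, if $\Gamma_1(G)=\Gamma_1(H)$. Ordered join: for a poset $S$ and a family $(G_i)_{i\in S}$ of games, $S \otimes_i G_i$ is the game whose options are exactly the ordered joins $S \otimes_i G'_i$ obtained by choosing one $i_0\in S$ and an option $G_{i_0}\to G'_{i_0}$, and setting $G'_i=\mathbf{0}$ for all $i>i_0$ and $G'_i=G_i$ for all other $i\ne i_0$. *)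

(** * Sets (for ordinals): Aczel's model of well-founded sets. *)
Inductive zset : Type := zsup : forall A : Type, (A -> zset) -> zset.

Fixpoint zeq (x y : zset) {struct x} : Prop :=
  match x, y with
  | zsup A f, zsup B g =>
      (forall a, exists b, zeq (f a) (g b)) /\ (forall b, exists a, zeq (f a) (g b))
  end.

Definition zin (x y : zset) : Prop :=
  match y with zsup B g => exists b, zeq x (g b) end.
Definition zsub (x y : zset) : Prop := forall z, zin z x -> zin z y.

(** von Neumann ordinals: transitive sets of transitive sets (the universe of
    zsets is well-founded, so this is the usual notion of ordinal). *)
Definition ztransitive (x : zset) : Prop := forall z, zin z x -> zsub z x.
Definition zordinal (x : zset) : Prop :=
  ztransitive x /\ forall z, zin z x -> ztransitive z.

Definition is_mex (L : zset -> Prop) (a : zset) : Prop :=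
  zordinal a /\ ~ L a /\ (forall b, zordinal b -> ~ L b -> zsub a b).

(** * Games.  A terminating impartial game is a well-founded tree: a game
    is given by its family of options. *)
Inductive game : Type := Game : forall A : Type, (A -> game) -> game.

Definition is_option (g x : game) : Prop :=
  match g with Game A f => exists a, f a = x end.

Definition zero : game := Game Empty_set (fun e => match e with end).

Fixpoint grundy (g : game) (a : zset) : Prop :=
  match g with
  | Game A f => is_mex (fun b => exists i, grundy (f i) b) a
  end.

Definition grundy_set (g : game) (a : zset) : Prop :=
  exists x, is_option g x /\ grundy x a.

Definition equiv1 (g h : game) : Prop :=
  forall a, grundy_set g a <-> grundy_set h a.

Definition is_poset (S : Type) (le : S -> S -> Prop) : Prop :=
  (forall i, le i i) /\
  (forall i j, le i j -> le j i -> i = j) /\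
  (forall i j k, le i j -> le j k -> le i k).

Definition slt {S : Type} (le : S -> S -> Prop) (i j : S) : Prop :=
  le i j /\ i <> j.

Definition moved {S : Type} (le : S -> S -> Prop) (F : S -> game) (i0 : S)
    (g' : game) (F' : S -> game) : Prop :=
  F' i0 = g' /\
  (forall i, slt le i0 i -> F' i = zero) /\
  (forall i, i <> i0 -> ~ slt le i0 i -> F' i = F i).

(** Since [game] consists of
    well-founded trees, such a J exists iff the ordered join is terminating. *)
Inductive ordered_join {S : Type} (le : S -> S -> Prop) :
    (S -> game) -> game -> Prop :=
| oj_intro : forall (F : S -> game) (J : game),
    (forall X, is_option J X ->
       exists i0 g' F', is_option (F i0) g' /\ moved le F i0 g' F' /\
                        ordered_join le F' X) ->
    (forall i0 g' F', is_option (F i0) g' -> moved le F i0 g' F' ->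
       exists X, is_option J X /\ ordered_join le F' X) ->
    ordered_join le F J.

(* The theorem is then obtained from a stronger invariant.  Two families F,
   F' are [related] if at every index i either F_i ≃₁ F'_i, or F_i and F'_i
   have the same Grundy number and every component strictly above i is a dead
   game (has no option) in both families.  By a double well-founded induction
   on the two joins, related families have joins with equal Grundy numbers:
   an option of the first join is answered either by the corresponding move
   in the second join (when the Grundy value of the move is available there)
   or by a further move in the same component back to the common Grundy value.
   Finally, the options of S ⊗ G and S ⊗ H obtained by matching moves in
   1-equivalent components are joins of related families. *)

From Stdlib Require Import Classical ClassicalEpsilon Relations Wellfounded.

Lemma zeq_refl x : zeq x x.
Proof. induction x as [A f IH]; simpl; split; intro a; exists a; auto. Qed.

Lemma zeq_sym : forall x y, zeq x y -> zeq y x.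
Proof.
  induction x as [A f IH]; destruct y as [B g]; simpl; intros [fg gf]; split.
  - intro b; destruct (gf b) as [a Ha]; exists a; apply IH; auto.
  - intro a; destruct (fg a) as [b Hb]; exists b; apply IH; auto.
Qed.

Lemma zeq_trans : forall x y z, zeq x y -> zeq y z -> zeq x z.
Proof.
  induction x as [A f IH]; destruct y as [B g]; destruct z as [C h]; simpl;
    intros [fg gf] [gh hg]; split.
  - intro a; destruct (fg a) as [b Hb]; destruct (gh b) as [c Hc]; exists c; eauto.
  - intro c; destruct (hg c) as [b Hb]; destruct (gf b) as [a Ha]; exists a; eauto.
Qed.

Lemma zin_zeq_l x x' y : zeq x x' -> zin x y -> zin x' y.
Proof.
  destruct y as [B g]; simpl; intros E [b Hb]; exists b.
  eapply zeq_trans; [apply zeq_sym; exact E | exact Hb].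
Qed.

Lemma zin_zeq_r x y y' : zeq y y' -> zin x y -> zin x y'.
Proof.
  destruct y as [B g]; destruct y' as [C h]; simpl; intros [gh _] [b Hb].
  destruct (gh b) as [c Hc]; exists c; eapply zeq_trans; eauto.
Qed.

Lemma zset_ext x y : zsub x y -> zsub y x -> zeq x y.
Proof.
  destruct x as [A f]; destruct y as [B g]; unfold zsub; simpl; intros xy yx; split.
  - intro a; apply xy; exists a; apply zeq_refl.
  - intro b; destruct (yx (g b)) as [a Ha]; [exists b; apply zeq_refl |].
    exists a; apply zeq_sym; auto.
Qed.

Lemma zeq_zsub x y : zeq x y -> zsub x y.
Proof. intros E z Hz; eapply zin_zeq_r; eauto. Qed.

Lemma zin_ind (P : zset -> Prop) :
  (forall x, (forall y, zin y x -> P y) -> P x) -> forall x, P x.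
Proof.
  intros step.
  assert (up_to_zeq : forall x y, zeq y x -> P y).
  { induction x as [A f IH]; intros y E; apply step; intros z Hz.
    destruct (zin_zeq_r _ _ _ E Hz) as [a Ha]; eapply IH; eauto. }
  intro x; apply (up_to_zeq x); apply zeq_refl.
Qed.

Lemma zin_irrefl x : ~ zin x x.
Proof. induction x as [x IH] using zin_ind; intro Hx; exact (IH x Hx Hx). Qed.

Lemma zordinal_zeq x y : zordinal x -> zeq x y -> zordinal y.
Proof.
  intros [Ht He] E; split.
  - intros z Hz w Hw; apply (zin_zeq_r _ _ _ E); apply (Ht z); auto.
    apply (zin_zeq_r _ _ _ (zeq_sym _ _ E)); auto.
  - intros z Hz; apply He; apply (zin_zeq_r _ _ _ (zeq_sym _ _ E)); auto.
Qed.

Lemma zordinal_elem x z : zordinal x -> zin z x -> zordinal z.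
Proof.
  intros [Ht He] Hz; split; [apply He; auto |].
  intros w Hw; apply He; apply (Ht z); auto.
Qed.

Lemma zordinal_trichotomy : forall x, zordinal x -> forall y, zordinal y ->
  zin x y \/ zeq x y \/ zin y x.
Proof.
  intro x; induction x as [x IHx] using zin_ind; intros Ox y.
  induction y as [y IHy] using zin_ind; intros Oy.
  destruct (classic (exists x', zin x' x /\ (zeq x' y \/ zin y x')))
    as [[x' [Hx' [E | Hy]]] | no_x'].
  - right; right; eapply zin_zeq_l; eauto.
  - right; right; apply (proj1 Ox x' Hx'); auto.
  - destruct (classic (exists y', zin y' y /\ (zin x y' \/ zeq x y')))
      as [[y' [Hy' [Hx | E]]] | no_y'].
    + left; apply (proj1 Oy y' Hy'); auto.
    + left; eapply zin_zeq_l; [apply zeq_sym; eauto | auto].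
    + right; left; apply zset_ext.
      * intros x' Hx'.
        destruct (IHx x' Hx' (zordinal_elem _ _ Ox Hx') y Oy) as [H | [H | H]];
          auto; exfalso; apply no_x'; eauto.
      * intros y' Hy'.
        destruct (IHy y' Hy' (zordinal_elem _ _ Oy Hy')) as [H | [H | H]];
          auto; exfalso; apply no_y'; eauto.
Qed.

(** Every family of ordinals has a mex: the set of those [b i] all of whose
    ordinal subsets are (equal to) members of the family. *)
Lemma mex_exists (A : Type) (b : A -> zset) :
  (forall i, zordinal (b i)) ->
  exists M, is_mex (fun c => exists i, zeq c (b i)) M.
Proof.
  intros Ob.
  set (L := fun c => exists i, zeq c (b i)).
  set (below_in_L := fun i => forall z, zordinal z -> zsub z (b i) -> L z).
  set (M := zsup {i : A | below_in_L i} (fun s => b (proj1_sig s))).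
  assert (inM : forall i, below_in_L i -> zin (b i) M).
  { intros i Hi; exists (exist _ i Hi); apply zeq_refl. }
  assert (elemM : forall z, zin z M -> exists i, below_in_L i /\ zeq z (b i)).
  { intros z [[i Hi] E]; exists i; auto. }
  assert (OM : zordinal M).
  { split.
    - intros z Hz w Hw; destruct (elemM z Hz) as [i [Qi E]].
      assert (wb : zin w (b i)) by (eapply zin_zeq_r; eauto).
      assert (Ow : zordinal w) by (eapply zordinal_elem; eauto).
      assert (wsub : zsub w (b i)) by (apply (proj1 (Ob i)); auto).
      destruct (Qi w Ow wsub) as [j Ej].
      assert (Qj : below_in_L j).
      { intros z' Oz' Hs; apply Qi; auto; intros u Hu; apply wsub.
        apply (zeq_zsub _ _ (zeq_sym _ _ Ej)); auto. }
      eapply zin_zeq_l; [apply zeq_sym; eauto | apply inM; auto].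
    - intros z Hz; destruct (elemM z Hz) as [i [_ E]].
      apply (zordinal_zeq (b i)); [auto | apply zeq_sym; auto]. }
  exists M; split; [exact OM | split].
  - intros [k Ek].
    assert (Qk : below_in_L k).
    { intros z Oz Hs.
      assert (zM : zsub z M)
        by (intros u Hu; apply (zeq_zsub _ _ (zeq_sym _ _ Ek)); auto).
      destruct (zordinal_trichotomy z Oz M OM) as [H | [H | H]].
      - destruct (elemM z H) as [i [_ E]]; exists i; auto.
      - exists k; eapply zeq_trans; eauto.
      - exfalso; apply (zin_irrefl M); auto. }
    apply (zin_irrefl M).
    eapply zin_zeq_l; [apply zeq_sym; exact Ek | apply inM; auto].
  - intros c Oc Nc z Hz; destruct (elemM z Hz) as [i [Qi E]].
    apply (zin_zeq_l (b i)); [apply zeq_sym; auto |].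
    destruct (zordinal_trichotomy (b i) (Ob i) c Oc) as [H | [H | H]]; auto.
    + exfalso; apply Nc; exists i; apply zeq_sym; auto.
    + exfalso; apply Nc; apply Qi; auto; apply (proj1 (Ob i)); auto.
Qed.

Lemma grundy_zordinal g a : grundy g a -> zordinal a.
Proof. destruct g; simpl; intros [H _]; auto. Qed.

Lemma grundy_not_option g a x : grundy g a -> is_option g x -> ~ grundy x a.
Proof.
  destruct g as [A f]; simpl; intros [_ [N _]] [i <-] Hx; apply N; eauto.
Qed.

Lemma grundy_least g a b : grundy g a -> zordinal b ->
  (forall x, is_option g x -> ~ grundy x b) -> zsub a b.
Proof.
  destruct g as [A f]; simpl; intros [_ [_ least]] Ob H; apply least; auto.
  intros [i Hi]; apply (H (f i)); eauto.
Qed.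

Lemma grundy_zeq : forall g a b, grundy g a -> zeq a b -> grundy g b.
Proof.
  induction g as [A f IH]; simpl; intros a b [Oa [Na least]] E; split;
    [eapply zordinal_zeq; eauto | split].
  - intros [i Hi]; apply Na; exists i; eapply IH; [exact Hi | apply zeq_sym; auto].
  - intros c Oc Nc z Hz; apply (least c Oc Nc).
    eapply zin_zeq_r; [apply zeq_sym; eauto | auto].
Qed.

Lemma grundy_unique g a b : grundy g a -> grundy g b -> zeq a b.
Proof.
  intros Ha Hb; apply zset_ext; apply (grundy_least g); auto;
    try (eapply grundy_zordinal; eauto); intros x Hx; eapply grundy_not_option; eauto.
Qed.

Lemma grundy_exists : forall g, exists a, grundy g a.
Proof.
  induction g as [A f IH].
  set (b := fun i => proj1_sig (constructive_indefinite_description _ (IH i))).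
  assert (Hb : forall i, grundy (f i) (b i)).
  { intro i; unfold b; destruct constructive_indefinite_description; auto. }
  destruct (mex_exists A b (fun i => grundy_zordinal _ _ (Hb i))) as [M [OM [NM least]]].
  exists M; simpl; split; [auto | split].
  - intros [i Hi]; apply NM; exists i; eapply grundy_unique; eauto.
  - intros c Oc Nc; apply least; auto; intros [i Hi]; apply Nc; exists i.
    eapply grundy_zeq; [apply Hb | apply zeq_sym; auto].
Qed.

(** Reply property: if g and h have the same Grundy number c and the move
    g -> g' reaches a value a' that is not in Γ1(h), then a' > c, so g' has an
    option of value c. *)
Lemma option_of_common_value g h g' c a' :
  grundy g c -> grundy h c -> is_option g g' -> grundy g' a' ->
  ~ grundy_set h a' -> exists g'', is_option g' g'' /\ grundy g'' c.
Proof.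
  intros Hg Hh Hg' Ga' not_in_h; apply NNPP; intro no_reply.
  assert (a'_le_c : zsub a' c).
  { apply (grundy_least g'); auto; [eapply grundy_zordinal; eauto |].
    intros x Hx Hxc; apply no_reply; eauto. }
  assert (c_le_a' : zsub c a').
  { apply (grundy_least h); auto; [eapply grundy_zordinal; eauto |].
    intros x Hx Hxc; apply not_in_h; exists x; auto. }
  apply (grundy_not_option g c g'); auto.
  eapply grundy_zeq; [exact Ga' | apply zset_ext; auto].
Qed.

Definition dead (g : game) : Prop := forall x, ~ is_option g x.

Lemma dead_zero : dead zero.
Proof. intros x [[] _]. Qed.

Lemma equiv1_dead g h : dead g -> dead h -> equiv1 g h.
Proof.
  intros Dg Dh a; split; intros [x [Hx _]]; [destruct (Dg x Hx) | destruct (Dh x Hx)].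
Qed.

Definition subgame : game -> game -> Prop :=
  clos_trans game (fun x g => is_option g x).

Lemma subgame_wf : well_founded subgame.
Proof.
  apply wf_clos_trans; intro g; induction g as [A f IH]; constructor.
  intros y [a <-]; apply IH.
Qed.

Section OrderedJoins.
Variable S : Type.
Variable le : S -> S -> Prop.

Definition move_family (F : S -> game) (i0 : S) (g : game) : S -> game := fun i =>
  if excluded_middle_informative (i = i0) then g
  else if excluded_middle_informative (slt le i0 i) then zero else F i.

Lemma move_family_moved F i0 g : moved le F i0 g (move_family F i0 g).
Proof.
  unfold move_family; split; [| split].
  - destruct excluded_middle_informative; congruence.
  - intros i [Hle Hne]; destruct excluded_middle_informative; [congruence |].
    destruct excluded_middle_informative as [| Hn]; auto.
    exfalso; apply Hn; split; auto.
  - intros i Hne Hs; destruct excluded_middle_informative; [congruence |].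
    destruct excluded_middle_informative; [contradiction | auto].
Qed.

Lemma moved_twice F i0 g1 G1 g2 G2 :
  moved le F i0 g1 G1 -> moved le G1 i0 g2 G2 -> moved le F i0 g2 G2.
Proof.
  intros [_ [above1 other1]] [at2 [above2 other2]]; split; [auto | split; auto].
  intros i Hne Hs; rewrite other2; auto.
Qed.

Lemma join_option F J X : ordered_join le F J -> is_option J X ->
  exists i0 g' F', is_option (F i0) g' /\ moved le F i0 g' F' /\
                   ordered_join le F' X.
Proof. intros [? ? opts _]; apply opts. Qed.

Lemma join_move F J i0 g' : ordered_join le F J -> is_option (F i0) g' ->
  exists X, is_option J X /\ ordered_join le (move_family F i0 g') X.
Proof. intros [? ? _ moves] Hg'; apply (moves i0 g'); auto; apply move_family_moved. Qed.

Definition related (F F' : S -> game) : Prop := forall i,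
  equiv1 (F i) (F' i) \/
  ((exists c, grundy (F i) c /\ grundy (F' i) c) /\
   forall j, slt le i j -> dead (F j) /\ dead (F' j)).

Lemma related_sym F F' : related F F' -> related F' F.
Proof.
  intros R i; destruct (R i) as [E | [[c [H1 H2]] D]].
  - left; intro a; split; apply E.
  - right; split; [eauto |]; intros j Hj; destruct (D j Hj); auto.
Qed.

Lemma related_matched_moves F F' i0 g' h' G' H' a :
  related F F' -> is_option (F i0) g' ->
  moved le F i0 g' G' -> moved le F' i0 h' H' -> grundy g' a -> grundy h' a ->
  related G' H'.
Proof.
  intros R Hg' [at1 [above1 other1]] [at2 [above2 other2]] Ga Ha i.
  destruct (classic (i = i0)) as [-> | Hne].
  - right; split; [exists a; rewrite at1, at2; auto |].
    intros j Hj; rewrite above1, above2; auto; split; apply dead_zero.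
  - destruct (classic (slt le i0 i)) as [Hs | Hs].
    + left; rewrite above1, above2; auto; intro; tauto.
    + rewrite other1, other2; auto.
      destruct (R i) as [E | [C D]]; [left; auto | right; split; auto].
      intros j Hj; destruct (classic (j = i0)) as [-> | Hj0].
      * exfalso; apply (proj1 (D i0 Hj) g' Hg').
      * destruct (classic (slt le i0 j)) as [Hs' | Hs'].
        -- rewrite above1, above2; auto; split; apply dead_zero.
        -- rewrite other1, other2; auto.
Qed.

Lemma related_reply F F' i0 g G c :
  related F F' -> ~ dead (F i0) -> moved le F i0 g G ->
  (forall j, slt le i0 j -> dead (F' j)) -> grundy g c -> grundy (F' i0) c ->
  related G F'.
Proof.
  intros R live [at1 [above1 other1]] dead_above Gc Fc i.
  destruct (classic (i = i0)) as [-> | Hne].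
  - right; split; [exists c; rewrite at1; auto |].
    intros j Hj; rewrite above1; auto; split; [apply dead_zero | auto].
  - destruct (classic (slt le i0 i)) as [Hs | Hs].
    + left; rewrite above1; auto; apply equiv1_dead; [apply dead_zero | auto].
    + rewrite other1; auto.
      destruct (R i) as [E | [C D]]; [left; auto | right; split; auto].
      intros j Hj; destruct (classic (j = i0)) as [-> | Hj0].
      * exfalso; apply live; apply (D i0 Hj).
      * destruct (classic (slt le i0 j)) as [Hs' | Hs'].
        -- rewrite above1; auto; split; [apply dead_zero | apply dead_above; auto].
        -- rewrite other1; auto.
Qed.

Definition same_grundy (X Y : game) : Prop := forall F F' x y,
  ordered_join le F X -> ordered_join le F' Y -> related F F' ->
  grundy X x -> grundy Y y -> zeq x y.

Lemma same_grundy_sym X Y : same_grundy X Y -> same_grundy Y X.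
Proof.
  intros E F F' y x OY OX R Gy Gx; apply zeq_sym.
  apply (E F' F); auto; apply related_sym; auto.
Qed.

Section NoOptionOfValue.
Variables (Y : game) (F F' : S -> game) (y : zset).
Hypotheses (OY : ordered_join le F' Y) (R : related F F') (Gy : grundy Y y).

Variables (X' g' : game) (G' : S -> game) (i0 : S) (a' : zset).
Hypotheses (Hg' : is_option (F i0) g')
  (Mg : moved le F i0 g' G') (OG' : ordered_join le G' X') (Ga' : grundy g' a').

(** If F' i0 has an option of the same value, the matching option of Y has
    the Grundy number of X', which therefore differs from y. *)
Lemma matched_option_value :
  (forall Y', is_option Y Y' -> same_grundy X' Y') ->
  grundy_set (F' i0) a' -> ~ grundy X' y.
Proof.
  intros IH [h' [Hh' Ha']] GX'.
  destruct (join_move F' Y i0 h' OY Hh') as [Y' [HY' OY']].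
  assert (RG : related G' (move_family F' i0 h')).
  { eapply related_matched_moves; eauto; apply move_family_moved. }
  destruct (grundy_exists Y') as [y' Gy'].
  assert (E : zeq y y') by (eapply (IH Y'); eauto).
  apply (grundy_not_option Y y Y'); auto.
  eapply grundy_zeq; [exact Gy' | apply zeq_sym; auto].
Qed.

(** Otherwise X' has an option X'' related to Y, whose Grundy number is y. *)
Lemma unmatched_option_value :
  (forall X'', is_option X' X'' -> same_grundy X'' Y) ->
  ~ grundy_set (F' i0) a' ->
  (exists c, grundy (F i0) c /\ grundy (F' i0) c) ->
  (forall j, slt le i0 j -> dead (F j) /\ dead (F' j)) ->
  ~ grundy X' y.
Proof.
  intros IH unmatched [c [Fc F'c]] D GX'.
  destruct (option_of_common_value _ _ _ _ _ Fc F'c Hg' Ga' unmatched)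
    as [g'' [Hg'' Gc]].
  assert (HG'g'' : is_option (G' i0) g'') by (destruct Mg as [-> _]; auto).
  destruct (join_move G' X' i0 g'' OG' HG'g'') as [X'' [HX'' OX'']].
  assert (RG : related (move_family G' i0 g'') F').
  { eapply related_reply; eauto.
    - intro dead_i0; apply (dead_i0 g' Hg').
    - eapply moved_twice; [exact Mg | apply move_family_moved].
    - intros j Hj; apply (D j Hj). }
  destruct (grundy_exists X'') as [x'' Gx''].
  assert (E : zeq x'' y) by (eapply (IH X''); eauto).
  apply (grundy_not_option X' y X''); auto; eapply grundy_zeq; eauto.
Qed.

End NoOptionOfValue.

Lemma no_option_of_value X Y F F' y :
  (forall X' Y', is_option X X' -> is_option Y Y' -> same_grundy X' Y') ->
  (forall X' X'', is_option X X' -> is_option X' X'' -> same_grundy X'' Y) ->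
  ordered_join le F X -> ordered_join le F' Y -> related F F' -> grundy Y y ->
  forall X', is_option X X' -> ~ grundy X' y.
Proof.
  intros IH_both IH_two OX OY R Gy X' HX'.
  destruct (join_option F X X' OX HX') as [i0 [g' [G' [Hg' [Mg OG']]]]].
  destruct (grundy_exists g') as [a' Ga'].
  destruct (classic (grundy_set (F' i0) a')) as [matched | unmatched].
  - apply (matched_option_value Y F F' y OY R Gy X' g' G' i0 a'); auto.
  - destruct (R i0) as [E | [C D]].
    + exfalso; apply unmatched, E; exists g'; auto.
    + apply (unmatched_option_value Y F F' y OY R Gy X' g' G' i0 a'); eauto.
Qed.

(** Main induction, on the pair of joins (first X, then Y): each join
    avoids the Grundy number of the other, hence they are equal. *)
Lemma related_joins_same_grundy : forall X Y, same_grundy X Y.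
Proof.
  intro X; induction X as [X IHX] using (well_founded_ind subgame_wf).
  intro Y; induction Y as [Y IHY] using (well_founded_ind subgame_wf).
  intros F F' x y OX OY R Gx Gy.
  assert (option_subgame : forall g g', is_option g g' -> subgame g' g) by (intros; apply t_step; auto).
  assert (option2_subgame : forall g g' g'', is_option g g' -> is_option g' g'' -> subgame g'' g)
    by (intros; eapply t_trans; apply t_step; eauto).
  apply zset_ext.
  - apply (grundy_least X); [auto | eapply grundy_zordinal; eauto |].
    eapply no_option_of_value; eauto; intros; apply IHX; eauto.
  - apply (grundy_least Y); [auto | eapply grundy_zordinal; eauto |].
    apply (no_option_of_value Y X F' F); auto using related_sym.
    + intros Y' X' HY' HX'; apply same_grundy_sym, IHX; auto.
    + intros Y' Y'' HY' HY''; apply same_grundy_sym, IHY; eauto.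
Qed.

(** Componentwise 1-equivalence gives Γ1(S ⊗ G) ⊆ Γ1(S ⊗ H): an option of
    the first join is matched by the corresponding move in the second one. *)
Lemma grundy_set_join_incl G H JG JH a :
  ordered_join le G JG -> ordered_join le H JH ->
  (forall i, equiv1 (G i) (H i)) -> grundy_set JG a -> grundy_set JH a.
Proof.
  intros OG OH equiv [X [HX GX]].
  destruct (join_option G JG X OG HX) as [i0 [g' [G' [Hg' [Mg OG']]]]].
  destruct (grundy_exists g') as [a' Ga'].
  destruct (proj1 (equiv i0 a') (ex_intro _ g' (conj Hg' Ga'))) as [h' [Hh' Ha']].
  destruct (join_move H JH i0 h' OH Hh') as [Y [HY OY]].
  assert (RG : related G' (move_family H i0 h')).
  { apply (related_matched_moves G H i0 g' h' G' (move_family H i0 h') a'); auto.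
    - intro i; left; auto.
    - apply move_family_moved. }
  destruct (grundy_exists Y) as [y Gy].
  exists Y; split; auto; eapply grundy_zeq; [exact Gy |].
  apply zeq_sym; apply (related_joins_same_grundy X Y G' (move_family H i0 h')); auto.
Qed.

End OrderedJoins.

Theorem mainTheorem5 (S : Type) (le : S -> S -> Prop) (HS : is_poset S le)
    (G H : S -> game) (JG JH : game)
    (hG : ordered_join le G JG) (hH : ordered_join le H JH)
    (h1 : forall i, equiv1 (G i) (H i)) :
  equiv1 JG JH.
Proof.
  intro a; split.
  - apply (grundy_set_join_incl S le G H JG JH a); auto.
  - apply (grundy_set_join_incl S le H G JH JG a); auto.
    intros i b; split; apply h1.
Qed.
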